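(* Let $f:\mathbb{R}^n\times\mathbb{R}\to\mathbb{R}$ be continuous and satisfy Assumption 1 on $R\times I$, where $R=\prod_{k=1}^n[\xi_k,\eta_k]$ ($\xi_k<\eta_k$) and $I$ is a compact interval, and suppose that the (unique) function $g:R\to I$ with $f(x,g(x))=0$ on $R$ is a polynomial in $x=(x_1,\dots,x_n)$. Let $a\in R$, and choose integers $N_k$ with $N_k$ larger than the largest exponent of $x_k$ occurring in $g$ ($k=1,\dots,n$); set $N=(N_1,\dots,N_n)$. Then $$g(x)=\sum_{0\le\beta\le N-1}c_\beta (x-a)^\beta,\qquad c_\beta=\prod_{k=1}^n(\beta_k+1)\sum_{1\le\alpha\le N}\ \prod_{k=1}^n\big(V_{N_k}^{-1}\big)_{\beta_k+1,\,\alpha_k}\, d_\alpha ,$$ where the sums run over multi-indices. (Equivalently, $(c_\beta)_\beta$ is the Hadamard product of $W$ with the tensor obtained from $(d_\alpha)_\alpha$ by applying $V_{N_k}^{-1}$ in the $k$-th index for every $k$, $W$ being the $N_1\times\cdots\times N_n$ tensor with entries $\gamma_1\cdots\gamma_n$.) Moreover these coefficients do not depend on the choice of $N$ as long as each $N_k$ exceeds the largest exponent of $x_k$ in $g$ (additional coefficients are zero).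
   Context: Multi-index notation: for $\alpha,\beta\in\mathbb{Z}^n$, $\alpha\le\beta$ means $\alpha_k\le\beta_k$ for all $k$, $(x-a)^\beta=\prod_k(x_k-a_k)^{\beta_k}$, and $N-1=(N_1-1,\dots,N_n-1)$. $\operatorname{sign}_y f(x,y)=1$ if $f(x,y)\ge0$ and $-1$ otherwise; $\Theta_y f(x,y)=1$ if $f(x,y)\ge0$ and $0$ otherwise. Assumption 1 on $R\times I$: for every $x\in R$, $y\mapsto\operatorname{sign}_y f(x,y)$ has exactly one jump discontinuity on $I$. $n_y(f)\in\{1,-1\}$ is $1$ if $y\mapsto\operatorname{sign}_y f(x,y)$ is increasing on $I$ and $-1$ if decreasing (constant in $x\in R$). Partition data: $\Delta_k=(\eta_k-\xi_k)/N_k$; for $1\le\alpha\le N$, the grid block $R_\alpha=\prod_{k=1}^n[\xi_k+(\alpha_k-1)\Delta_k,\ \xi_k+\alpha_k\Delta_k]$; $V_{N_k}$ is the $N_k\times N_k$ matrix with entry in row $\alpha_k$, column $j$ equal to $(\xi_k+\alpha_k\Delta_k-a_k)^j-(\xi_k+(\alpha_k-1)\Delta_k-a_k)^j$ (invertible); and $$d_\alpha=\frac{1+n_y(f)}{2}|R_\alpha|\max I+\frac{1-n_y(f)}{2}|R_\alpha|\min I-n_y(f)\iint_{R_\alpha\times I}\Theta_y f(x,y)\,dx\,dy .$$ *)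

From HB Require Import structures.
From mathcomp Require Import all_boot all_order all_algebra.
From mathcomp Require Import all_classical all_reals all_analysis.
Set Implicit Arguments. Unset Strict Implicit. Unset Printing Implicit Defensive.
Import Order.TTheory GRing.Theory Num.Theory.
Import numFieldNormedType.Exports.
Local Open Scope classical_set_scope.
Local Open Scope ring_scope.

Section Defs.
Variables (R : realType) (n : nat).

Definition inbox (xi eta : 'I_n -> R) (x : 'rV[R]_n) : Prop :=
  forall k, xi k <= x ord0 k <= eta k.

Definition Iset (c d : R) : set R := [set y | c <= y <= d].

Definition sgnf (f : 'rV[R]_n -> R -> R) (x : 'rV[R]_n) (y : R) : R :=
  if 0 <= f x y then 1 else -1.
Definition Thetaf (f : 'rV[R]_n -> R -> R) (x : 'rV[R]_n) (y : R) : R :=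
  if 0 <= f x y then 1 else 0.

Definition cont_within_at (A : set R) (h : R -> R) (y0 : R) : Prop :=
  h @ within A (nbhs y0) --> h y0.

(* Assumption 1 on R x I: for every x in the box, y |-> sign_y f(x,y) has exactly
   one (jump) discontinuity on I (discontinuity of the restriction to I). *)
Definition assumption1 (f : 'rV[R]_n -> R -> R) (xi eta : 'I_n -> R) (c d : R) : Prop :=
  forall x, inbox xi eta x ->
    exists y0, [/\ Iset c d y0, ~ cont_within_at (Iset c d) (sgnf f x) y0 &
      forall y, Iset c d y -> ~ cont_within_at (Iset c d) (sgnf f x) y -> y = y0].

Definition ny_spec (f : 'rV[R]_n -> R -> R) (xi eta : 'I_n -> R) (c d : R) (ny : R) : Prop :=
  (ny = 1 /\ forall x, inbox xi eta x -> forall y1 y2, Iset c d y1 -> Iset c d y2 ->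
      y1 <= y2 -> sgnf f x y1 <= sgnf f x y2)
  \/
  (ny = -1 /\ forall x, inbox xi eta x -> forall y1 y2, Iset c d y1 -> Iset c d y2 ->
      y1 <= y2 -> sgnf f x y2 <= sgnf f x y1).

Definition midx (N : 'I_n -> nat) := {dffun forall k : 'I_n, 'I_(N k)}.

Definition poly_deg_lt (xi eta : 'I_n -> R) (N : 'I_n -> nat) (g : 'rV[R]_n -> R) : Prop :=
  exists q : midx N -> R, forall x, inbox xi eta x ->
    g x = \sum_(b : midx N) q b * \prod_(k < n) (x ord0 k) ^+ (b k).

Definition Delta (xi eta : 'I_n -> R) (N : 'I_n -> nat) (k : 'I_n) : R :=
  (eta k - xi k) / (N k)%:R.

(* the matrix V_{N_k} (0-indexed: row i <-> alpha_k = i+1, column j <-> exponent j+1) *)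
Definition Vmx (xi eta : 'I_n -> R) (N : 'I_n -> nat) (a : 'rV[R]_n) (k : 'I_n) : 'M[R]_(N k) :=
  \matrix_(i, j) ((xi k + (i.+1)%:R * Delta xi eta N k - a ord0 k) ^+ j.+1
                 - (xi k + (i : nat)%:R * Delta xi eta N k - a ord0 k) ^+ j.+1).

(* entry of a square matrix at natural-number indices (0 outside the range) *)
Definition mxe (m : nat) (A : 'M[R]_m) (i j : nat) : R :=
  match (insub i : option 'I_m), (insub j : option 'I_m) with
  | Some i', Some j' => A i' j'
  | _, _ => 0
  end.

Definition setc (x : 'rV[R]_n) (k : 'I_n) (t : R) : 'rV[R]_n :=
  \row_j (if j == k then t else x ord0 j).

Definition boxint (lo hi : 'I_n -> R) (h : 'rV[R]_n -> R) : R :=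
  (foldr (fun k (G : 'rV[R]_n -> R) => fun x =>
            \int[lebesgue_measure]_(t in `[lo k, hi k]) G (setc x k t))
         h (enum 'I_n)) 0.

(* the grid block R_alpha (alpha 0-indexed: alpha_paper = alpha + 1) *)
Definition blo (xi eta : 'I_n -> R) (N : 'I_n -> nat) (al : midx N) (k : 'I_n) : R :=
  xi k + ((al k : nat))%:R * Delta xi eta N k.
Definition bhi (xi eta : 'I_n -> R) (N : 'I_n -> nat) (al : midx N) (k : 'I_n) : R :=
  xi k + ((al k).+1)%:R * Delta xi eta N k.

Definition dcoef (f : 'rV[R]_n -> R -> R) (xi eta : 'I_n -> R) (c d ny : R)
    (N : 'I_n -> nat) (al : midx N) : R :=
  let vol := \prod_(k < n) Delta xi eta N k in
  (1 + ny) / 2 * vol * d + (1 - ny) / 2 * vol * c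
  - ny * boxint (blo xi eta al) (bhi xi eta al)
           (fun x => \int[lebesgue_measure]_(y in `[c, d]) Thetaf f x y).

(* c_beta for a multi-index beta : 'I_n -> nat, extended by 0 outside 0 <= beta <= N-1 *)
Definition ccoef (f : 'rV[R]_n -> R -> R) (xi eta : 'I_n -> R) (c d ny : R)
    (a : 'rV[R]_n) (N : 'I_n -> nat) (b : 'I_n -> nat) : R :=
  if [forall k, (b k < N k)%N] then
    (\prod_(k < n) ((b k).+1)%:R) *
    \sum_(al : midx N) (\prod_(k < n) mxe (invmx (Vmx xi eta N a k)) (b k) (al k))
                       * dcoef f xi eta c d ny al
  else 0.

End Defs.

From HB Require Import structures.
From mathcomp Require Import all_boot all_order all_algebra.
From mathcomp Require Import all_classical all_reals all_analysis.
From mathcomp Require Import ring lra.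
Import Order.TTheory GRing.Theory Num.Theory.
Import numFieldNormedType.Exports.
Local Open Scope classical_set_scope.
Local Open Scope ring_scope.
Set Implicit Arguments. Unset Strict Implicit. Unset Printing Implicit Defensive.

(* Since the sign of [f x] on [I] is monotone with a single jump, that jump is the unique zero
   [g x] (intermediate value theorem), so the [y]-integral of Theta is [d - g x] or [g x - c]
   and [d_alpha] is the integral of [g] over the block [R_alpha].  Integrating [(x - a)^beta]
   over the blocks factors coordinatewise into the columns of [V_{N_k}] divided by
   [beta_k + 1]; these Vandermonde-type matrices are invertible, so applying their inverses
   and multiplying by [beta_k + 1] recovers the coefficients of [g] expanded at [a].  Since
   this recovery works on any grid on which [g] is expanded, comparing two grids inside their
   sum shows that the coefficients do not depend on [N]. *)

Section RealLine.
Variable R : realType.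
Local Notation mu := (@lebesgue_measure R).

Lemma Rintegral_indic_itv (c d u v : R) : c <= u -> u <= v -> v <= d ->
  \int[mu]_(y in `[c, d]) (\1_(`[u, v] : set R) y : R) = v - u.
Proof.
move=> cu uv vd; rewrite /Rintegral integral_indic //= setIidl; last first.
  by move=> y /=; rewrite !in_itv /= => /andP[uy yv]; rewrite (le_trans cu uy) (le_trans yv vd).
rewrite lebesgue_measure_itv /= lte_fin; case: ifPn => [_ //|].
rewrite -leNgt => vu; have -> : v = u by apply: le_anti; rewrite uv vu.
by rewrite subrr.
Qed.

Lemma nonneg_iff_root_le (h : R -> R) (c d z : R) :
  continuous h -> c <= z <= d -> h z = 0 ->
  (forall y, c <= y <= d -> h y = 0 -> y = z) ->
  (exists2 y, c <= y <= d & h y < 0) ->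
  (forall y1 y2, c <= y1 <= d -> c <= y2 <= d -> y1 <= y2 -> 0 <= h y1 -> 0 <= h y2) ->
  forall y, c <= y <= d -> (0 <= h y) = (z <= y).
Proof.
move=> hc zI hz zuniq [y' y'I hy'] mono y yI.
apply/idP/idP => [hy|zy]; last by apply: mono zI yI zy _; rewrite hz.
rewrite leNgt; apply/negP => yz.
have y'y : y' < y.
  by rewrite ltNge; apply/negP => yy'; move: (mono _ _ yI y'I yy' hy); rewrite leNgt hy'.
have [w] : exists2 w, w \in `[y', y] & h w = 0.
  by apply: IVT (ltW y'y) (continuous_subspaceT hc) _; rewrite ge_min le_max (ltW hy') hy orbT.
rewrite in_itv /= => /andP[y'w wy] hw.
have wz : w = z by apply: zuniq hw; move: y'I yI => /andP[cy' _] /andP[_ yd]; lra.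
by move: yz; rewrite -wz ltNge wy.
Qed.

(* Reflect [y |-> -y] to reduce to the increasing case. *)
Lemma nonneg_iff_le_root (h : R -> R) (c d z : R) :
  continuous h -> c <= z <= d -> h z = 0 ->
  (forall y, c <= y <= d -> h y = 0 -> y = z) ->
  (exists2 y, c <= y <= d & h y < 0) ->
  (forall y1 y2, c <= y1 <= d -> c <= y2 <= d -> y1 <= y2 -> 0 <= h y2 -> 0 <= h y1) ->
  forall y, c <= y <= d -> (0 <= h y) = (y <= z).
Proof.
move=> hc zI hz zuniq [y' y'I hy'] mono y yI.
have mirror t : (- d <= t <= - c) = (c <= - t <= d) by rewrite lerNr lerNl andbC.
rewrite -[y in LHS]opprK -[y <= z]lerN2.
apply: (@nonneg_iff_root_le (fun t => h (- t)) (- d) (- c)); rewrite ?mirror ?opprK //.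
- by move=> t; apply: continuous_comp; [exact: opp_continuous | exact: hc].
- by move=> t; rewrite mirror => tI ht; rewrite -(zuniq _ tI ht) opprK.
- by exists (- y'); rewrite ?mirror opprK.
- by move=> t1 t2; rewrite !mirror => t1I t2I t12; apply: mono; rewrite ?lerN2.
Qed.

End RealLine.

Lemma continuous_section (T U V : topologicalType) (f : T -> U -> V) :
  continuous (fun p : T * U => f p.1 p.2) -> forall x, continuous (f x).
Proof.
move=> hf x y; apply: (@continuous2_cvg _ _ _ _ (nbhs y) _ (fun _ => x) id f x y).
- exact: (hf (x, y)).
- exact: cvg_cst.
- exact: cvg_id.
Qed.

Section Theta.
Variables (R : realType) (n : nat) (f : 'rV[R]_n -> R -> R).
Variables (xi eta : 'I_n -> R) (c d : R) (g : 'rV[R]_n -> R).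
Hypothesis hf : continuous (fun p : 'rV[R]_n * R => f p.1 p.2).
Hypothesis A1 : assumption1 f xi eta c d.
Hypothesis g_root : forall x, inbox xi eta x -> Iset c d (g x) /\ f x (g x) = 0.
Hypothesis g_uniq : forall x y, inbox xi eta x -> Iset c d y -> f x y = 0 -> y = g x.

(* A sign that is nonnegative on all of [I] would be continuous there. *)
Lemma assumption1_neg x : inbox xi eta x -> exists2 y, Iset c d y & f x y < 0.
Proof.
move=> xb; case: (pselect (exists2 y, Iset c d y & f x y < 0)) => // nneg.
have [y0 [y0I nc _]] := A1 xb; exfalso; apply: nc.
have pos y : Iset c d y -> sgnf f x y = 1.
  move=> yI; rewrite /sgnf ifT // leNgt; by apply/negP => fy; apply: nneg; exists y.
rewrite /cont_within_at pos //; apply: cvg_near_cst; rewrite near_withinE.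
by near=> y => yI; rewrite pos.
Unshelve. all: by end_near.
Qed.

Lemma Thetaf_integral ny x : ny_spec f xi eta c d ny -> inbox xi eta x ->
  \int[lebesgue_measure]_(y in `[c, d]) Thetaf f x y
  = (1 + ny) / 2 * d - (1 - ny) / 2 * c - ny * g x.
Proof.
move=> Hny xb; have [gI fg] := g_root xb; move: (gI) => /andP[cg gd].
have neg := assumption1_neg xb; have uniq := g_uniq xb.
have cont := @continuous_section _ _ _ f hf x.
case: Hny => [[-> mono]|[-> mono]].
- have sgn := nonneg_iff_root_le cont gI fg uniq neg.
  transitivity (\int[lebesgue_measure]_(y in `[c, d]) (\1_(`[g x, d] : set R) y : R));
    last by rewrite Rintegral_indic_itv //; lra.
  apply: eq_Rintegral => y /set_mem /=; rewrite in_itv /= => yI.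
  rewrite /Thetaf indicE mem_setE in_itv /= sgn //; last first.
    move=> y1 y2 y1I y2I y12 fy1; have := mono x xb y1 y2 y1I y2I y12.
    by rewrite /sgnf fy1; case: ifP => // _; lra.
  by rewrite (andP yI).2 andbT; case: ifP.
- have sgn := nonneg_iff_le_root cont gI fg uniq neg.
  transitivity (\int[lebesgue_measure]_(y in `[c, d]) (\1_(`[c, g x] : set R) y : R));
    last by rewrite Rintegral_indic_itv //; lra.
  apply: eq_Rintegral => y /set_mem /=; rewrite in_itv /= => yI.
  rewrite /Thetaf indicE mem_setE in_itv /= sgn //; last first.
    move=> y1 y2 y1I y2I y12 fy2; have := mono x xb y1 y2 y1I y2I y12.
    by rewrite /sgnf fy2; case: ifP => // _; lra.
  by rewrite (andP yI).1; case: ifP.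
Qed.

End Theta.

Section BoxIntegral.
Variable R : realType.
Local Notation mu := (@lebesgue_measure R).

Lemma Rintegral_deriv_horner (Q : {poly R}) (l h : R) : l < h ->
  \int[mu]_(t in `[l, h]) (Q^`()).[t] = Q.[h] - Q.[l].
Proof.
move=> lh; rewrite /Rintegral (@continuous_FTC2 _ (horner Q^`()) (horner Q)) //.
- by apply: continuous_subspaceT; exact: continuous_horner.
- split.
  + by move=> x _; exact: derivable_horner.
  + by apply: cvg_at_right_filter; exact: continuous_horner.
  + by apply: cvg_at_left_filter; exact: continuous_horner.
- by move=> x _; rewrite -derivE.
Qed.

Definition powint (l h a : R) (m : nat) : R :=
  ((h - a) ^+ m.+1 - (l - a) ^+ m.+1) / (m.+1)%:R.

Lemma Rintegral_sum_pow (I : finType) (C : I -> R) (e : I -> nat) (l h a : R) : l < h ->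
  \int[mu]_(t in `[l, h]) (\sum_i C i * (t - a) ^+ e i)
  = \sum_i C i * powint l h a (e i).
Proof.
move=> lh.
pose P := \sum_i (C i / (e i).+1%:R) *: ('X - a%:P) ^+ (e i).+1.
have dP : P^`() = \sum_i C i *: ('X - a%:P) ^+ e i.
  rewrite raddf_sum; apply: eq_bigr => i _ /=.
  rewrite derivZ deriv_exp derivXsubC mul1r /= -scalerMnr scalerMnl.
  by congr (_ *: _); rewrite -mulr_natr -mulrA mulVf ?mulr1 // pnatr_eq0.
transitivity (\int[mu]_(t in `[l, h]) (P^`()).[t]).
  apply: eq_Rintegral => t _; rewrite dP horner_sum; apply: eq_bigr => i _.
  by rewrite hornerZ horner_exp !hornerE.
rewrite Rintegral_deriv_horner // !horner_sum -sumrB; apply: eq_bigr => i _.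
by rewrite !hornerZ !horner_exp !hornerE /powint -mulrBr mulrAC.
Qed.

Variable n : nat.

Definition boxstep (lo hi : 'I_n -> R) (k : 'I_n) (G : 'rV[R]_n -> R) : 'rV[R]_n -> R :=
  fun x => \int[mu]_(t in `[lo k, hi k]) G (setc x k t).

Lemma boxintE lo hi h : boxint lo hi h = foldr (boxstep lo hi) h (enum 'I_n) 0.
Proof. by []. Qed.

Lemma eq_foldr_boxstep (lo hi : 'I_n -> R) (h1 h2 : 'rV[R]_n -> R) (s : seq 'I_n)
    (x : 'rV[R]_n) :
  (forall y : 'rV[R]_n, (forall j, j \in s -> lo j <= y ord0 j <= hi j) ->
     (forall j, j \notin s -> y ord0 j = x ord0 j) -> h1 y = h2 y) ->
  foldr (boxstep lo hi) h1 s x = foldr (boxstep lo hi) h2 s x.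
Proof.
elim: s x => [|k s IH] x H /=.
  by apply: H => // j; rewrite in_nil.
apply: eq_Rintegral => t; rewrite inE /= in_itv /= => tI.
apply: IH => y H1 H2; apply: H => j.
  rewrite inE => /orP[/eqP->|js]; last exact: H1.
  case: (boolP (k \in s)) => ks; first exact: H1.
  by rewrite H2 // mxE eqxx.
by rewrite inE negb_or => /andP[jk js]; rewrite H2 // mxE (negbTE jk).
Qed.

Lemma eq_boxint (lo hi : 'I_n -> R) (h1 h2 : 'rV[R]_n -> R) :
  (forall y : 'rV[R]_n, (forall k, lo k <= y ord0 k <= hi k) -> h1 y = h2 y) ->
  boxint lo hi h1 = boxint lo hi h2.
Proof.
move=> H; rewrite !boxintE; apply: eq_foldr_boxstep => y Hy _.
by apply: H => k; apply: Hy; rewrite mem_enum.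
Qed.

Lemma foldr_boxstep_poly (I : finType) (w : I -> R) (e : I -> 'I_n -> nat) (a : 'rV[R]_n)
    (lo hi : 'I_n -> R) (s : seq 'I_n) (x : 'rV[R]_n) :
  (forall k, lo k < hi k) -> uniq s ->
  foldr (boxstep lo hi) (fun y => \sum_i w i * \prod_k (y ord0 k - a ord0 k) ^+ e i k) s x
  = \sum_i w i * \prod_k (if k \in s then powint (lo k) (hi k) (a ord0 k) (e i k)
                          else (x ord0 k - a ord0 k) ^+ e i k).
Proof.
move=> lohi; elim: s x => [|k s IH] x /=.
  by move=> _; apply: eq_bigr => i _; congr (_ * _); apply: eq_bigr => j _; rewrite in_nil.
move=> /andP[ks us]; rewrite /boxstep.
pose C i := w i * \prod_(j | j != k) (if j \in s then powint (lo j) (hi j) (a ord0 j) (e i j)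
                          else (x ord0 j - a ord0 j) ^+ e i j).
transitivity (\int[mu]_(t in `[lo k, hi k]) \sum_i C i * (t - a ord0 k) ^+ e i k).
  apply: eq_Rintegral => t _; rewrite IH //; apply: eq_bigr => i _.
  rewrite /C (bigD1 k) //= (negbTE ks) mxE eqxx mulrAC -mulrA; congr (_ * (_ * _)).
  by apply: eq_bigr => j jk; rewrite mxE (negbTE jk).
rewrite Rintegral_sum_pow //; apply: eq_bigr => i _.
rewrite /C -mulrA; congr (_ * _).
rewrite [in RHS](bigD1 k) //= inE eqxx /= mulrC; congr (_ * _).
by apply: eq_bigr => j jk; rewrite inE (negbTE jk).
Qed.

Lemma boxint_poly (I : finType) (w : I -> R) (e : I -> 'I_n -> nat) (a : 'rV[R]_n)
    (lo hi : 'I_n -> R) : (forall k, lo k < hi k) ->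
  boxint lo hi (fun y => \sum_i w i * \prod_k (y ord0 k - a ord0 k) ^+ e i k)
  = \sum_i w i * \prod_k powint (lo k) (hi k) (a ord0 k) (e i k).
Proof.
move=> lohi; rewrite boxintE foldr_boxstep_poly ?enum_uniq //.
by apply: eq_bigr => i _; congr (_ * _); apply: eq_bigr => k _; rewrite mem_enum.
Qed.

End BoxIntegral.

Definition below (n : nat) (G b : 'I_n -> nat) : bool := [forall k, (b k < G k)%N].

Lemma belowP (n : nat) (G b : 'I_n -> nat) : reflect (forall k, (b k < G k)%N) (below G b).
Proof. exact: forallP. Qed.

Section MultiIndex.
Variables (R : comPzRingType) (n B : nat).
Local Notation Ix := {ffun 'I_n -> 'I_B.+1}.
Variables (G : 'I_n -> nat) (HB : forall k, (G k <= B.+1)%N).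

Lemma sum_below_prod (F : 'I_n -> nat -> R) :
  \sum_(b : Ix | below G (fun k => b k)) \prod_k F k (b k)
  = \prod_k \sum_(j < G k) F k j.
Proof.
under [RHS]eq_bigr => k _ do rewrite (big_ord_widen B.+1 (F k) (HB k)).
rewrite bigA_distr_big_dep; apply: eq_bigl => b.
by apply/belowP/familyP => H k; move: (H k).
Qed.

Lemma sum_midx (Gp : forall k, (0 < G k)%N) (F : ('I_n -> nat) -> R) :
  \sum_(al : midx G) F (fun k => al k)
  = \sum_(b : Ix | below G (fun k => b k)) F (fun k => b k).
Proof.
pose widen (al : midx G) : Ix := [ffun k => widen_ord (HB k) (al k)].
pose narrow (b : Ix) : midx G :=
  @finfun _ (fun k => 'I_(G k)) (fun k => insubd (Ordinal (Gp k)) (b k : nat)).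
rewrite (reindex widen) /=; last first.
  exists narrow => [al _|b]; last rewrite inE => /belowP bG;
    apply/ffunP => k; apply: val_inj; rewrite /narrow /widen !ffunE /=.
    by rewrite val_insubd /= ltn_ord.
  by rewrite val_insubd bG.
apply: eq_big => [al|al _]; last by congr F; apply/funext => k; rewrite ffunE.
by apply/esym/belowP => k /=; rewrite ffunE /=.
Qed.

Lemma sum_below_delta (F : ('I_n -> nat) -> R) (b : 'I_n -> nat) : below G b ->
  \sum_(be : Ix | below G (fun k => be k)) F (fun k => be k) * \prod_k ((b k == be k)%:R)
  = F b.
Proof.
move=> /belowP bG; have bB k : (b k < B.+1)%N := leq_trans (bG k) (HB k).
pose b0 : Ix := [ffun k => Ordinal (bB k)].
have b0E : (fun k => b0 k : nat) = b by apply/funext => k; rewrite ffunE.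
rewrite (bigD1 b0) /=; last by rewrite b0E; exact/belowP.
rewrite [X in _ + X]big1 ?addr0; last first.
  move=> be /andP[_ neq]; have [k bk] : exists k, b k != be k.
    apply/existsP; apply: contraNT neq; rewrite negb_exists => /forallP H.
    apply/eqP/ffunP => k; apply: val_inj; rewrite ffunE /=; apply/eqP.
    by have := H k; rewrite negbK eq_sym.
  by rewrite (bigD1 k) //= (negbTE bk) mul0r mulr0.
by rewrite b0E big1 ?mulr1 // => k _; rewrite ffunE eqxx.
Qed.

Lemma expr_shift (x a : R) (m M : nat) : (m < M)%N ->
  x ^+ m = \sum_(j < M) ('C(m, j)%:R * a ^+ (m - j)) * (x - a) ^+ j.
Proof.
move=> mM; rewrite -[x in LHS](subrKC a) exprDn.
rewrite (big_ord_widen M (fun i => (a ^+ (m - i) * (x - a) ^+ i) *+ 'C(m, i))) //.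
rewrite big_mkcond; apply: eq_bigr => i _; case: ltnP => im.
  by rewrite -mulr_natl mulrA.
by rewrite bin_small // mul0r mul0r.
Qed.

Lemma shift_center (q : midx G -> R) (a : 'rV[R]_n) :
  exists P : ('I_n -> nat) -> R, forall x : 'rV[R]_n,
    \sum_(b : midx G) q b * \prod_k x ord0 k ^+ b k
    = \sum_(be : Ix | below G (fun k => be k))
        P (fun k => be k) * \prod_k (x ord0 k - a ord0 k) ^+ be k.
Proof.
exists (fun be => \sum_b q b * \prod_k ('C(b k, be k)%:R * a ord0 k ^+ (b k - be k))).
move=> x; under eq_bigr => b _.
  rewrite (eq_bigr (fun k => \sum_(j < G k) ('C(b k, j)%:R * a ord0 k ^+ (b k - j))
                                          * (x ord0 k - a ord0 k) ^+ j)); last first.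
    by move=> k _; exact: expr_shift.
  rewrite -(sum_below_prod (fun k j => ('C(b k, j)%:R * a ord0 k ^+ (b k - j))
                                          * (x ord0 k - a ord0 k) ^+ j)) mulr_sumr.
  over.
rewrite exchange_big /=; apply: eq_bigr => be _; rewrite mulr_suml; apply: eq_bigr => b _.
by rewrite big_split /= mulrA.
Qed.

End MultiIndex.

Lemma unitmx_pow_diff (F : fieldType) (m : nat) (u : nat -> F) :
  (forall i j, (i <= m)%N -> (j <= m)%N -> u i = u j -> i = j) ->
  (\matrix_(i < m, j < m) (u i.+1 ^+ j.+1 - u i ^+ j.+1)) \in unitmx.
Proof.
move=> uinj; set A := \matrix_(i < m, j < m) _.
rewrite -unitmx_tr -row_free_unit -kermx_eq0.
suff H : forall v : 'rV_m, v *m A^T = 0 -> v = 0.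
  apply/eqP/row_matrixP => i; rewrite row0; apply: H; apply/sub_kermxP; exact: row_sub.
move=> v vA.
(* [v] is the coefficient vector of a polynomial [Q] without constant term that takes the
   same value at the [m.+1] distinct points [u 0, ..., u m]. *)
pose w (j : nat) := if (insub j : option 'I_m) is Some j' then v 0 j' else 0.
pose Q : {poly F} := \poly_(i < m.+1) (if i is j.+1 then w j else 0).
have QE t : Q.[t] = \sum_(j < m) v 0 j * t ^+ j.+1.
  rewrite horner_poly big_ord_recl /= mul0r add0r; apply: eq_bigr => j _ /=.
  by rewrite /w valK.
have Qstep i : (i < m)%N -> Q.[u i.+1] = Q.[u i].
  move=> im; have := congr1 (fun M : 'rV_m => M 0 (Ordinal im)) vA; rewrite !mxE => H0.
  apply/eqP; rewrite -subr_eq0 !QE -sumrB; apply/eqP; rewrite -[RHS]H0.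
  by apply: eq_bigr => j _; rewrite !mxE mulrBr.
have Qc i : (i <= m)%N -> Q.[u i] = Q.[u 0].
  by elim: i => [//|i IH] im; rewrite Qstep // IH // ltnW.
have Q0 : Q - (Q.[u 0])%:P = 0.
  apply: (@roots_geq_poly_eq0 _ _ [seq u i | i <- iota 0 m.+1]).
  - apply/allP => t /mapP[i]; rewrite mem_iota => /andP[_ im] ->.
    by rewrite /root hornerD hornerN hornerC Qc // subrr.
  - rewrite map_inj_in_uniq ?iota_uniq // => i j.
    by rewrite !mem_iota => /andP[_ im] /andP[_ jm]; apply: uinj.
  - rewrite size_map size_iota; apply: leq_trans (size_polyD _ _) _.
    by rewrite geq_max size_poly size_polyN (leq_trans (size_polyC_leq1 _)).
apply/rowP => j; rewrite mxE.
have := congr1 (fun p : {poly F} => p`_(j.+1)) Q0.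
by rewrite coefB coefC coef_poly /= /w valK ltnS ltn_ord subr0 coef0.
Qed.

Lemma mxe_ord (R : realType) (m : nat) (A : 'M[R]_m) (i j : nat) (hi : (i < m)%N) (hj : (j < m)%N) :
  mxe A i j = A (Ordinal hi) (Ordinal hj).
Proof.
rewrite /mxe; case: insubP => [i' _ ei|]; last by rewrite hi.
case: insubP => [j' _ ej|]; last by rewrite hj.
by congr (A _ _); apply: val_inj.
Qed.

Section Coefficients.
Variables (R : realType) (n : nat) (f : 'rV[R]_n -> R -> R).
Variables (xi eta : 'I_n -> R) (c d ny : R) (g : 'rV[R]_n -> R) (a : 'rV[R]_n).
Hypothesis hf : continuous (fun p : 'rV[R]_n * R => f p.1 p.2).
Hypothesis xi_lt_eta : forall k, xi k < eta k.
Hypothesis A1 : assumption1 f xi eta c d.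
Hypothesis Hny : ny_spec f xi eta c d ny.
Hypothesis g_root : forall x, inbox xi eta x -> Iset c d (g x) /\ f x (g x) = 0.
Hypothesis g_uniq : forall x y, inbox xi eta x -> Iset c d y -> f x y = 0 -> y = g x.

Lemma ny_cases : ny = 1 \/ ny = -1.
Proof. by case: Hny => [[-> _]|[-> _]]; [left|right]. Qed.

Section FixedGrid.
Variables (B : nat) (G : 'I_n -> nat).
Local Notation Ix := {ffun 'I_n -> 'I_B.+1}.
Hypothesis HB : forall k, (G k <= B.+1)%N.
Hypothesis Gp : forall k, (0 < G k)%N.
Variable P : ('I_n -> nat) -> R.
Hypothesis g_taylor : forall x, inbox xi eta x ->
  g x = \sum_(be : Ix | below G (fun k => be k))
          P (fun k => be k) * \prod_k (x ord0 k - a ord0 k) ^+ be k.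

Local Notation V k := (Vmx xi eta G a k).

Lemma Delta_gt0 k : 0 < Delta xi eta G k.
Proof. by rewrite /Delta divr_gt0 ?subr_gt0 ?xi_lt_eta // ltr0n Gp. Qed.

Lemma blo_lt_bhi (al : midx G) k : blo xi eta al k < bhi xi eta al k.
Proof. by rewrite /blo /bhi ltrD2l ltr_pM2r ?Delta_gt0 // ltr_nat. Qed.

Lemma block_in_box (al : midx G) (y : 'rV[R]_n) :
  (forall k, blo xi eta al k <= y ord0 k <= bhi xi eta al k) -> inbox xi eta y.
Proof.
move=> H k; have /andP[h1 h2] := H k; have D0 := Delta_gt0 k; apply/andP; split.
  by apply: le_trans h1; rewrite /blo lerDl mulr_ge0 // ltW.
apply: le_trans h2 _; rewrite /bhi /Delta -lerBrDl mulrC -mulrA.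
rewrite -[leRHS]mulr1 ler_pM2l ?subr_gt0 ?xi_lt_eta // mulrC ler_pdivrMr ?ltr0n ?Gp //.
by rewrite mul1r ler_nat ltn_ord.
Qed.

Lemma powint_block (al : midx G) k j : (j < G k)%N ->
  powint (blo xi eta al k) (bhi xi eta al k) (a ord0 k) j = mxe (V k) (al k) j / (j.+1)%:R.
Proof. by move=> jG; rewrite (mxe_ord _ (ltn_ord (al k)) jG) mxE. Qed.

(* With [ny] = +-1 the Theta-integral is affine in [g], so [d_alpha] is the integral of [g]
   over the block [R_alpha]; the constant term rides on the zero exponent [b0]. *)
Lemma dcoef_block (al : midx G) :
  dcoef f xi eta c d ny al = \sum_(be : Ix | below G (fun k => be k))
    P (fun k => be k) * \prod_k (mxe (V k) (al k) (be k) / (be k).+1%:R).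
Proof.
pose K := (1 + ny) / 2 * d - (1 - ny) / 2 * c.
pose b0 : Ix := [ffun => ord0].
pose w (be : Ix) := - ny * (if below G (fun k => be k) then P (fun k => be k) else 0)
                    + (be == b0)%:R * K.
have sum_w (F : Ix -> R) : \sum_(be : Ix) w be * F be =
    - ny * (\sum_(be : Ix | below G (fun k => be k)) P (fun k => be k) * F be) + K * F b0.
  rewrite (eq_bigr (fun be : Ix => - ny * ((if below G (fun k => be k) then P (fun k => be k)
           else 0) * F be) + (be == b0)%:R * K * F be)) => [|be _]; last first.
    by rewrite mulrDl mulrA.
  rewrite big_split /= -mulr_sumr; congr (_ * _ + _).
    by rewrite [RHS]big_mkcond; apply: eq_bigr => be _; case: ifP; rewrite ?mul0r.
  rewrite (bigD1 b0) //= eqxx mul1r big1 ?addr0 // => be /negbTE ->.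
  by rewrite !mul0r.
have theta : boxint (blo xi eta al) (bhi xi eta al)
      (fun x => \int[lebesgue_measure]_(y in `[c, d]) Thetaf f x y)
    = boxint (blo xi eta al) (bhi xi eta al)
      (fun y => \sum_(be : Ix) w be * \prod_k (y ord0 k - a ord0 k) ^+ be k).
  apply: eq_boxint => y /block_in_box yB.
  rewrite (Thetaf_integral hf A1 g_root g_uniq Hny yB) sum_w -g_taylor //.
  by rewrite big1 => [|k _]; rewrite ?ffunE ?expr0 // /K; ring.
have vol : \prod_k powint (blo xi eta al k) (bhi xi eta al k) (a ord0 k) (b0 k)
    = \prod_k Delta xi eta G k.
  apply: eq_bigr => k _; rewrite ffunE /powint /= !expr1 divr1 /blo /bhi.
  by rewrite -addn1 natrD; ring.
rewrite /dcoef /= theta boxint_poly => [|k]; last exact: blo_lt_bhi.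
have blocks : \sum_(be : Ix | below G (fun k => be k)) P (fun k => be k)
      * \prod_k powint (blo xi eta al k) (bhi xi eta al k) (a ord0 k) (be k)
    = \sum_(be : Ix | below G (fun k => be k))
      P (fun k => be k) * \prod_k (mxe (V k) (al k) (be k) / (be k).+1%:R).
  apply: eq_bigr => be /belowP beG; congr (_ * _).
  by apply: eq_bigr => k _; exact: powint_block.
rewrite sum_w vol blocks.
by rewrite /K; have [->|->] := ny_cases; ring.
Qed.

Lemma Vmx_unit k : V k \in unitmx.
Proof.
apply: (@unitmx_pow_diff _ _ (fun i : nat => xi k + i%:R * Delta xi eta G k - a ord0 k)).
move=> i j _ _ /addIr/addrI/mulIf H; apply/eqP; rewrite -(eqr_nat R); apply/eqP.
by apply: H; rewrite gt_eqF // Delta_gt0.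
Qed.

Lemma mulVmx_mxe k (i j : nat) : (i < G k)%N -> (j < G k)%N ->
  \sum_(l < G k) mxe (invmx (V k)) i l * mxe (V k) l j = (i == j)%:R.
Proof.
move=> hi hj.
have := congr1 (fun M : 'M[R]_(G k) => M (Ordinal hi) (Ordinal hj)) (mulVmx (Vmx_unit k)).
rewrite !mxE /= => <-; apply: eq_bigr => l _.
rewrite (mxe_ord _ hi (ltn_ord l)) (mxe_ord _ (ltn_ord l) hj).
by congr (_ * _); congr (_ _ _); apply: val_inj.
Qed.

(* Applying [V^-1] in every index to [d] undoes the block integration of the monomials. *)
Lemma invV_dcoef (b : 'I_n -> nat) : below G b ->
  \sum_(al : midx G) (\prod_k mxe (invmx (V k)) (b k) (al k)) * dcoef f xi eta c d ny al
  = P b * \prod_k (b k).+1%:R^-1.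
Proof.
move=> bG.
pose F (al : 'I_n -> nat) := \sum_(be : Ix | below G (fun k => be k))
  \prod_k mxe (invmx (V k)) (b k) (al k) *
  (P (fun k => be k) * \prod_k (mxe (V k) (al k) (be k) / (be k).+1%:R)).
rewrite (eq_bigr (fun al : midx G => F (fun k => al k))) => [|al _]; last first.
  by rewrite dcoef_block mulr_sumr.
rewrite (sum_midx HB Gp F) /F.
rewrite exchange_big /=.
rewrite -(sum_below_delta HB (fun be => P be * \prod_k (be k).+1%:R^-1) bG).
apply: eq_bigr => be /belowP beG.
under eq_bigr do rewrite mulrCA -big_split /=.
rewrite -mulr_sumr (sum_below_prod HB (fun k l =>
   mxe (invmx (V k)) (b k) l * (mxe (V k) l (be k) / (be k).+1%:R))) -mulrA -big_split /=.
congr (_ * _); apply: eq_bigr => k _.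
under eq_bigr do rewrite mulrA.
by rewrite -mulr_suml mulVmx_mxe ?(belowP _ _ bG) // mulrC.
Qed.

Lemma ccoef_taylor (b : 'I_n -> nat) :
  ccoef f xi eta c d ny a G b = if below G b then P b else 0.
Proof.
rewrite /ccoef /below; case: ifP => // bG; rewrite invV_dcoef // mulrCA -big_split /=.
by rewrite big1 ?mulr1 // => k _; rewrite mulfV // pnatr_eq0.
Qed.

End FixedGrid.

Lemma taylor_rep (B : nat) (G : 'I_n -> nat) : (forall k, (G k <= B.+1)%N) ->
  poly_deg_lt xi eta G g ->
  exists P : ('I_n -> nat) -> R, forall x, inbox xi eta x ->
    g x = \sum_(be : {ffun 'I_n -> 'I_B.+1} | below G (fun k => be k))
            P (fun k => be k) * \prod_k (x ord0 k - a ord0 k) ^+ be k.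
Proof.
move=> HB [q Hq]; have [P HP] := shift_center HB q a.
by exists P => x xb; rewrite Hq // HP.
Qed.

Lemma ccoef_widen (B : nat) (G M : 'I_n -> nat) :
  (forall k, (M k <= B.+1)%N) -> (forall k, (0 < G k)%N) -> (forall k, (G k <= M k)%N) ->
  forall P : ('I_n -> nat) -> R, (forall x, inbox xi eta x ->
    g x = \sum_(be : {ffun 'I_n -> 'I_B.+1} | below G (fun k => be k))
            P (fun k => be k) * \prod_k (x ord0 k - a ord0 k) ^+ be k) ->
  forall b, ccoef f xi eta c d ny a M b = ccoef f xi eta c d ny a G b.
Proof.
move=> HB Gp GM P HP b.
have GMb b' : below G b' -> below M b'.
  by move=> /belowP bG; apply/belowP => k; exact: leq_trans (bG k) (GM k).
pose P0 b' := if below G b' then P b' else 0.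
have HP0 x : inbox xi eta x ->
    g x = \sum_(be : {ffun 'I_n -> 'I_B.+1} | below M (fun k => be k))
            P0 (fun k => be k) * \prod_k (x ord0 k - a ord0 k) ^+ be k.
  move=> xb; rewrite HP // big_mkcond [RHS]big_mkcond; apply: eq_bigr => be _ /=.
  rewrite /P0.
  by case: (boolP (below G _)) => [/GMb -> //|_]; case: ifP; rewrite ?mul0r.
have Mp k : (0 < M k)%N := leq_trans (Gp k) (GM k).
have HBG k : (G k <= B.+1)%N := leq_trans (GM k) (HB k).
rewrite (ccoef_taylor HB Mp HP0) (ccoef_taylor HBG Gp HP) /P0.
by case: (boolP (below G b)) => [/GMb -> //|_]; case: ifP.
Qed.

Lemma ccoef_expansion (N : 'I_n -> nat) : (forall k, (0 < N k)%N) ->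
  poly_deg_lt xi eta N g -> forall x, inbox xi eta x ->
  g x = \sum_(b : midx N) ccoef f xi eta c d ny a N (fun k => b k)
                          * \prod_k (x ord0 k - a ord0 k) ^+ b k.
Proof.
move=> Np HN; have HB k : (N k <= (\max_k N k).+1)%N by rewrite ltnW // ltnS leq_bigmax.
have [P HP] := taylor_rep HB HN; move=> x xb.
rewrite HP // (sum_midx HB Np (fun b => ccoef f xi eta c d ny a N b
                                        * \prod_k (x ord0 k - a ord0 k) ^+ b k)).
by apply: eq_bigr => be beG; rewrite (ccoef_taylor HB Np HP) beG.
Qed.

(* Both grids embed into the grid [N + N'], whose coefficients are computed by either. *)
Lemma ccoef_stable (N N' : 'I_n -> nat) :
  (forall k, (0 < N k)%N) -> (forall k, (0 < N' k)%N) ->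
  poly_deg_lt xi eta N g -> poly_deg_lt xi eta N' g ->
  forall b, ccoef f xi eta c d ny a N' b = ccoef f xi eta c d ny a N b.
Proof.
move=> Np Np' HN HN' b; pose M k := (N k + N' k)%N.
have HB k : (M k <= (\max_k M k).+1)%N by rewrite ltnW // ltnS leq_bigmax.
have NM k : (N k <= M k)%N := leq_addr _ _.
have N'M k : (N' k <= M k)%N := leq_addl _ _.
have [P HP] := taylor_rep (fun k => leq_trans (NM k) (HB k)) HN.
have [P' HP'] := taylor_rep (fun k => leq_trans (N'M k) (HB k)) HN'.
by rewrite -(ccoef_widen HB Np' N'M HP') (ccoef_widen HB Np NM HP).
Qed.

End Coefficients.

Theorem theorem3p2 (R : realType) (n : nat) (f : 'rV[R]_n -> R -> R)
    (xi eta : 'I_n -> R) (c d ny : R) (g : 'rV[R]_n -> R) (a : 'rV[R]_n)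
    (N : 'I_n -> nat) :
  continuous (fun p : 'rV[R]_n * R => f p.1 p.2) ->
  (forall k, xi k < eta k) ->
  c <= d ->
  assumption1 f xi eta c d ->
  ny_spec f xi eta c d ny ->
  (forall x, inbox xi eta x -> Iset c d (g x) /\ f x (g x) = 0) ->
  (forall x y, inbox xi eta x -> Iset c d y -> f x y = 0 -> y = g x) ->
  inbox xi eta a ->
  (forall k, (0 < N k)%N) ->
  poly_deg_lt xi eta N g ->
  (forall x, inbox xi eta x ->
     g x = \sum_(b : midx N) ccoef f xi eta c d ny a N (fun k => b k)
                             * \prod_(k < n) (x ord0 k - a ord0 k) ^+ (b k))
  /\
  (forall N' : 'I_n -> nat, (forall k, (0 < N' k)%N) -> poly_deg_lt xi eta N' g ->
     forall b : 'I_n -> nat,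
       ccoef f xi eta c d ny a N' b = ccoef f xi eta c d ny a N b).
Proof.
(* [c <= d] follows from the root [g x], and the expansion holds around any center [a]. *)
move=> hf xi_lt_eta _ A1 Hny g_root g_uniq _ Np HN; split.
  exact: (ccoef_expansion a hf xi_lt_eta A1 Hny g_root g_uniq Np HN).
move=> N' Np' HN'.
exact: (ccoef_stable a hf xi_lt_eta A1 Hny g_root g_uniq Np Np' HN HN').
Qed.
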